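(* Let $n\ge 2$. For $\alpha\in\mathbb{Z}_2^{n-1}$ and a bit $a$, write $\alpha a=(\alpha_0,\dots,\alpha_{n-2},a)\in\mathbb{Z}_2^n$; for $\alpha\in\mathbb{Z}_2^{n-2}$ and bits $a,b$, write $\alpha ab=(\alpha_0,\dots,\alpha_{n-3},a,b)\in\mathbb{Z}_2^n$. Then: (1) for every $\alpha\in\mathbb{Z}_2^{n-1}$, $\max_{\beta,\gamma\in\mathbb{Z}_2^n}\mathrm{adp}^{\mathrm{XR}}_{n-1}(\alpha0,\beta\to\gamma)=\mathrm{adp}^{\mathrm{XR}}_{n-1}(\alpha0,\alpha0\to0)$; (2) for every $\alpha\in\mathbb{Z}_2^{n-2}$, $\max_{\beta,\gamma\in\mathbb{Z}_2^n}\mathrm{adp}^{\mathrm{XR}}_{n-1}(\alpha01,\beta\to\gamma)=\mathrm{adp}^{\mathrm{XR}}_{n-1}(\alpha01,\alpha00\to2^{n-1})$; (3) for every $\alpha\in\mathbb{Z}_2^{n-2}$, $\max_{\beta,\gamma\in\mathbb{Z}_2^n}\mathrm{adp}^{\mathrm{XR}}_{n-1}(\alpha11,\beta\to\gamma)=\mathrm{adp}^{\mathrm{XR}}_{n-1}(\alpha11,\overline{\alpha}00\to2^{n-1})$.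
   Context: For $x\in\mathbb{Z}_2^n$ write $x=(x_0,\dots,x_{n-1})$ and identify $x$ with the integer $\sum_{i=0}^{n-1}x_i2^{n-1-i}$, so $x_0$ is the most significant bit; $x+y$, $x-y$, $-x$ are computed modulo $2^n$; $2^{n-1}$ is the vector $(1,0,\dots,0)$. $\oplus$ is bitwise XOR, $\overline{x}=(x_0\oplus1,\dots,x_{m-1}\oplus1)$ is the bitwise complement, and $x\lll r=(x_r,\dots,x_{n-1},x_0,\dots,x_{r-1})$. For $f:(\mathbb{Z}_2^n)^k\to\mathbb{Z}_2^n$, $\mathrm{adp}^f(\alpha_1,\dots,\alpha_k\to\alpha_{k+1})=2^{-kn}\#\{(x_1,\dots,x_k): f(x_1+\alpha_1,\dots,x_k+\alpha_k)=f(x_1,\dots,x_k)+\alpha_{k+1}\}$. For $1\le r\le n-1$, $\mathrm{adp}^{\mathrm{XR}}_r$ denotes $\mathrm{adp}^f$ for $f(x,y)=(x\oplus y)\lll r$. *)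

(* Bit vectors of Z_2^n as n-tuples of booleans, x_0 = MSB. *)
From mathcomp Require Import all_boot all_order all_algebra.
Set Implicit Arguments. Unset Strict Implicit. Unset Printing Implicit Defensive.
Import GRing.Theory Num.Theory.

Definition bv (n : nat) := n.-tuple bool.

(* the n-vector whose i-th coordinate is the i-th entry of s (false if absent);
   used for concatenations like alpha a, alpha a b (sizes match exactly when n >= 2) *)
Definition mk (n : nat) (s : seq bool) : bv n := [tuple nth false s i | i < n].

Definition bv2nat (n : nat) (x : bv n) : nat :=
  \sum_(i < n) (tnth x i : nat) * 2 ^ (n.-1 - i).

(* the vector identified with m mod 2^n *)
Definition nat2bv (n : nat) (m : nat) : bv n :=
  [tuple odd (m %/ 2 ^ (n.-1 - i)) | i < n].

Definition bvadd (n : nat) (x y : bv n) : bv n := nat2bv n (bv2nat x + bv2nat y).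

Definition bvxor (n : nat) (x y : bv n) : bv n := [tuple tnth x i (+) tnth y i | i < n].

Definition bvnot (n : nat) (x : bv n) : bv n := [tuple ~~ tnth x i | i < n].

Definition bvrotl (n : nat) (r : nat) (x : bv n) : bv n := mk n (rot r x).

Definition bvzero (n : nat) : bv n := nat2bv n 0.

Definition bvmsb (n : nat) : bv n := nat2bv n (2 ^ n.-1).

Definition adp2 (n : nat) (f : bv n -> bv n -> bv n) (a1 a2 a3 : bv n) : rat :=
  (#|[set p : bv n * bv n |
       f (bvadd p.1 a1) (bvadd p.2 a2) == bvadd (f p.1 p.2) a3]|)%:R
  / (2 ^ (2 * n))%:R.

Definition adpXR (n r : nat) (a1 a2 a3 : bv n) : rat :=
  adp2 (fun x y => bvrotl r (bvxor x y)) a1 a2 a3.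

From mathcomp Require Import all_boot all_order all_algebra.
From mathcomp Require Import zify.
Import GRing.Theory Num.Theory.

Set Implicit Arguments.
Unset Strict Implicit.
Unset Printing Implicit Defensive.

(* Read bit vectors as naturals; rotating left by n - 1 is then rotating right by one
   bit.  Once the least significant bits x0, y0 of x, y are split off, the XR condition
   becomes the additive-differential equation of xor on the n - 1 high bits, entered
   with the carries x0 a0, y0 b0 and with its final carry fixed by the bit rotated to
   the top.  Solved from the least significant bit upward, the number of solutions of
   that equation obeys a four-term recursion whose terms all vanish when a parity
   condition on the current bits fails.  It is therefore bounded by a quantity that
   depends only on the first difference and its carry, with equality when the third
   difference is 0 and the second is the first or its complement.  For even alpha 0
   all four low patterns (x0, y0) reach the bound at beta = alpha 0, gamma = 0; for an
   odd first difference the parity kills one of the two values of x0, and the stated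
   beta with gamma = 2^(n-1) reaches the bound. *)

(** * Binary expansions *)

Lemma odd_bit_double (b : bool) k : odd (b + k.*2) = b.
Proof. by rewrite oddD odd_double addbF oddb. Qed.

Lemma eqn_bit_double (b1 b2 : bool) k1 k2 :
  (b1 + k1.*2 == b2 + k2.*2) = (b1 == b2) && (k1 == k2).
Proof. by case: b1; case: b2 => /=; lia. Qed.

Lemma divn_pow2S k j : k %/ 2 ^ j.+1 = k./2 %/ 2 ^ j.
Proof. by rewrite expnS divnMA divn2. Qed.

Lemma modn_pow2S k m : k %% 2 ^ m.+1 = odd k + (k./2 %% 2 ^ m).*2.
Proof.
have lt_mod := ltn_pmod k./2 (expn_gt0 2 m).
rewrite -{1}(odd_double_half k) {1}(divn_eq k./2 (2 ^ m)).
set q := k./2 %/ 2 ^ m; set r := k./2 %% 2 ^ m.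
have -> : odd k + (q * 2 ^ m + r).*2 = q * 2 ^ m.+1 + (odd k + r.*2) by rewrite expnS; lia.
by rewrite modnMDl modn_small // expnS; case: (odd k) => /=; lia.
Qed.

Lemma modn_pow2S_top k m : k %% 2 ^ m.+1 = k %% 2 ^ m + odd (k %/ 2 ^ m) * 2 ^ m.
Proof.
have lt_mod := ltn_pmod k (expn_gt0 2 m).
rewrite {1}(divn_eq k (2 ^ m)) -{1}(odd_double_half (k %/ 2 ^ m)).
set q := (k %/ 2 ^ m)./2; set o := odd (k %/ 2 ^ m); set r := k %% 2 ^ m.
have -> : (o + q.*2) * 2 ^ m + r = q * 2 ^ m.+1 + (r + o * 2 ^ m) by rewrite expnS; lia.
by rewrite modnMDl modn_small // expnS; case: o => /=; lia.
Qed.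

Lemma eqn_modn_pow2S_top m w (b : bool) k : w < 2 ^ m ->
  (w + b * 2 ^ m == k %% 2 ^ m.+1) = (w == k %% 2 ^ m) && (b == odd (k %/ 2 ^ m)).
Proof.
move=> lt_w; rewrite modn_pow2S_top.
have := ltn_pmod k (expn_gt0 2 m).
by case: b; case: (odd _) => /= ?; apply/eqP/andP; try lia; case=> /eqP ? ?; lia.
Qed.

Lemma sum_bits n k : \sum_(j < n) odd (k %/ 2 ^ j) * 2 ^ j = k %% 2 ^ n.
Proof.
elim: n k => [|n IHn] k; first by rewrite big_ord0 expn0 modn1.
rewrite big_ord_recl /= expn0 divn1 muln1.
under eq_bigr => i _ do rewrite /bump /= add1n divn_pow2S expnS mulnCA.
by rewrite -big_distrr /= IHn modn_pow2S mul2n.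
Qed.

Lemma odd_div_sum_bits n (f : nat -> bool) k : k < n ->
  odd ((\sum_(j < n) f j * 2 ^ j) %/ 2 ^ k) = f k.
Proof.
elim: n f k => [|n IHn] f k // lt_kn.
rewrite big_ord_recl /= expn0 muln1.
under eq_bigr => i _ do rewrite /bump /= add1n expnS mulnCA.
rewrite -big_distrr /= mul2n.
case: k lt_kn => [|k] lt_kn; first by rewrite expn0 divn1 odd_bit_double.
by rewrite divn_pow2S half_bit_double (IHn (fun i => f i.+1)).
Qed.

Lemma nth_mk n s i : i < n -> nth false (mk n s) i = nth false s i.
Proof. by move=> lt_in; rewrite (nth_mktuple _ _ (Ordinal lt_in)). Qed.

Lemma nth_nat2bv n k i : i < n -> nth false (nat2bv n k) i = odd (k %/ 2 ^ (n.-1 - i)).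
Proof. by move=> lt_in; rewrite (nth_mktuple _ _ (Ordinal lt_in)). Qed.

Lemma nth_bvnot n (x : bv n) i : i < n -> nth false (bvnot x) i = ~~ nth false x i.
Proof. by move=> lt_in; rewrite (nth_mktuple _ _ (Ordinal lt_in)) (tnth_nth false). Qed.

Lemma nth_mk_cat2 m (s : seq bool) a b : size s = m ->
  [/\ nth false (mk m.+2 (s ++ [:: a; b])) m.+1 = b,
      nth false (mk m.+2 (s ++ [:: a; b])) m = a &
      forall i, i < m -> nth false (mk m.+2 (s ++ [:: a; b])) i = nth false s i].
Proof.
move=> size_s; rewrite !nth_mk // !nth_cat size_s ltnn subnn ltnNge leqnSn subSnn.
by split=> // i lt_i; rewrite nth_mk ?nth_cat ?size_s ?lt_i //; lia.
Qed.

Lemma bv2nat_lsb_first n (x : bv n) :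
  bv2nat x = \sum_(j < n) nth false x (n.-1 - j) * 2 ^ j.
Proof.
rewrite /bv2nat (reindex_inj rev_ord_inj) /=; apply: eq_bigr => j _.
have lt_jn := ltn_ord j.
rewrite (tnth_nth false) /=.
have -> : n - j.+1 = n.-1 - j by lia.
by have -> : n.-1 - (n.-1 - j) = j by lia.
Qed.

Lemma odd_bv2nat_div n (x : bv n) j : j < n ->
  odd (bv2nat x %/ 2 ^ j) = nth false x (n.-1 - j).
Proof.
by move=> lt_jn; rewrite bv2nat_lsb_first (odd_div_sum_bits (fun j => nth false x (n.-1 - j))).
Qed.

Lemma odd_bv2nat n (x : bv n.+1) : odd (bv2nat x) = nth false x n.
Proof. by rewrite -[bv2nat x]divn1 -(expn0 2) odd_bv2nat_div ?subn0. Qed.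

Lemma nat2bvK n : cancel (@bv2nat n) (nat2bv n).
Proof.
move=> x; apply: eq_from_tnth => i; rewrite tnth_mktuple (tnth_nth false).
have lt_in := ltn_ord i.
by rewrite odd_bv2nat_div; [congr nth|]; lia.
Qed.

Lemma bv2natK n k : bv2nat (nat2bv n k) = k %% 2 ^ n.
Proof.
rewrite bv2nat_lsb_first -sum_bits; apply: eq_bigr => j _.
have lt_jn := ltn_ord j.
rewrite nth_nat2bv; last by lia.
by have -> : n.-1 - (n.-1 - j) = j by lia.
Qed.

Lemma bv2nat_lt n (x : bv n) : bv2nat x < 2 ^ n.
Proof. by rewrite -(nat2bvK x) bv2natK ltn_pmod ?expn_gt0. Qed.

Lemma eq_nat2bv n k1 k2 : (nat2bv n k1 == nat2bv n k2) = (k1 %% 2 ^ n == k2 %% 2 ^ n).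
Proof.
apply/eqP/eqP => [eq_k|eq_k]; first by rewrite -!bv2natK eq_k.
by rewrite -[LHS]nat2bvK -[RHS]nat2bvK !bv2natK eq_k.
Qed.

(** * Xor and rotation on naturals *)

Fixpoint xorn m k1 k2 : nat :=
  if m is m'.+1 then (odd k1 (+) odd k2) + (xorn m' k1./2 k2./2).*2 else 0.

Lemma xorn_lt m k1 k2 : xorn m k1 k2 < 2 ^ m.
Proof.
elim: m k1 k2 => [|m IHm] k1 k2 //=.
by have := IHm k1./2 k2./2; rewrite expnS; case: (_ (+) _) => /=; lia.
Qed.

Lemma xorn_bit_double m (b1 b2 : bool) k1 k2 :
  xorn m.+1 (b1 + k1.*2) (b2 + k2.*2) = (b1 (+) b2) + (xorn m k1 k2).*2.
Proof. by rewrite /= !odd_bit_double !half_bit_double. Qed.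

Lemma odd_xorn_div m k1 k2 j : j < m ->
  odd (xorn m k1 k2 %/ 2 ^ j) = odd (k1 %/ 2 ^ j) (+) odd (k2 %/ 2 ^ j).
Proof.
elim: m k1 k2 j => [|m IHm] k1 k2 [|j] //= lt_jm.
  by rewrite !expn0 !divn1 odd_bit_double.
by rewrite !divn_pow2S half_bit_double IHm.
Qed.

Lemma bvxor_nat2bv n k1 k2 : bvxor (nat2bv n k1) (nat2bv n k2) = nat2bv n (xorn n k1 k2).
Proof.
apply: eq_from_tnth => i; rewrite !tnth_mktuple odd_xorn_div //.
by have := ltn_ord i; lia.
Qed.

Definition rotr1 n k := k./2 + odd k * 2 ^ n.-1.

Lemma rotr1_lt n k : 0 < n -> k < 2 ^ n -> rotr1 n k < 2 ^ n.
Proof.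
case: n => [//|n] _; rewrite /rotr1 /= expnS.
by have := odd_double_half k; case: (odd k) => /=; lia.
Qed.

Lemma rotr1_bit_double m (b : bool) k : rotr1 m.+1 (b + k.*2) = k + b * 2 ^ m.
Proof. by rewrite /rotr1 odd_bit_double half_bit_double. Qed.

Lemma bvrotl_nat2bv n k : 0 < n -> k < 2 ^ n ->
  bvrotl n.-1 (nat2bv n k) = nat2bv n (rotr1 n k).
Proof.
case: n => [//|m] _ lt_k; rewrite -(odd_double_half k) rotr1_bit_double.
apply: eq_from_tnth => i; rewrite !tnth_mktuple /rot nth_cat size_drop size_tuple.
have lt_im := ltn_ord i.
rewrite subSnn ltnS leqn0; case: eqP => [-> | /eqP ne_i0].
  rewrite nth_drop addn0 nth_nat2bv // subn0 subnn expn0 divn1 odd_bit_double.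
  rewrite /= addnC divnMDl ?expn_gt0 // divn_small ?addn0 ?oddb //.
  by move: lt_k; rewrite expnS; case: (odd k) => /=; lia.
rewrite nth_take; last by lia.
rewrite nth_nat2bv; last by lia.
have -> : m - (i - 1) = (m - i).+1 by lia.
rewrite divn_pow2S half_bit_double.
have -> : 2 ^ m = 2 ^ i * 2 ^ (m - i) by rewrite -expnD; congr (_ ^ _); lia.
rewrite mulnA addnC divnMDl ?expn_gt0 // oddD oddM oddX /=.
by rewrite orbF (negbTE ne_i0) andbF.
Qed.

(** * Counting pairs of bit vectors *)

Lemma sum_nat_double K (F : nat -> nat) :
  \sum_(0 <= k < K.*2) F k =
  \sum_(0 <= k < K) F (false + k.*2) + \sum_(0 <= k < K) F (true + k.*2).
Proof.
elim: K => [|K IHK]; first by rewrite !big_geq.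
rewrite doubleS !big_nat_recr //= IHK add0n add1n.
by rewrite -!addnA; congr (_ + _); rewrite addnCA.
Qed.

Lemma sum2_nat_double K (F : nat -> nat -> nat) :
  \sum_(0 <= k1 < K.*2) \sum_(0 <= k2 < K.*2) F k1 k2 =
  \sum_(0 <= k1 < K) \sum_(0 <= k2 < K) F (false + k1.*2) (false + k2.*2) +
  \sum_(0 <= k1 < K) \sum_(0 <= k2 < K) F (false + k1.*2) (true + k2.*2) +
  \sum_(0 <= k1 < K) \sum_(0 <= k2 < K) F (true + k1.*2) (false + k2.*2) +
  \sum_(0 <= k1 < K) \sum_(0 <= k2 < K) F (true + k1.*2) (true + k2.*2).
Proof.
rewrite sum_nat_double.
under eq_bigr => k1 _ do rewrite sum_nat_double.
under [X in _ + X]eq_bigr => k1 _ do rewrite sum_nat_double.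
by rewrite !big_split /= !addnA.
Qed.

Lemma sum_bv n (F : bv n -> nat) :
  \sum_(x : bv n) F x = \sum_(0 <= k < 2 ^ n) F (nat2bv n k).
Proof.
rewrite big_mkord (reindex (fun k : 'I_(2 ^ n) => nat2bv n k)) //=.
exists (fun x => Ordinal (bv2nat_lt x)) => [k _|x _]; last exact: nat2bvK.
by apply: val_inj; rewrite /= bv2natK modn_small.
Qed.

Lemma card_bv_pairs n (P : bv n -> bv n -> bool) :
  #|[set p : bv n * bv n | P p.1 p.2]| =
  \sum_(0 <= k1 < 2 ^ n) \sum_(0 <= k2 < 2 ^ n) P (nat2bv n k1) (nat2bv n k2).
Proof.
rewrite -sum1dep_card big_mkcond /=.
rewrite -(pair_bigA _ (fun x y => if P x y then 1 else 0)) /= sum_bv.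
by apply: eq_bigr => k1 _; rewrite sum_bv; apply: eq_bigr => k2 _; case: (P _ _).
Qed.

(** * Carry counting for the additive differential of xor *)

Definition carry (a b c : bool) := (a && b) || (c && (a || b)).

Lemma carry_id x c : carry x c c = c.
Proof. by case: x; case: c. Qed.

Lemma addn_bit_double (x a c : bool) k1 k2 :
  x + k1.*2 + (a + k2.*2) + c = (x (+) a (+) c) + (k1 + k2 + carry x a c).*2.
Proof. by case: x; case: a; case: c => /=; lia. Qed.

(* The m-bit equation (X + A) xor (Y + B) = (X xor Y) + G with carries c1, c2, c3
   entering the three additions, and e the carry out of the last one. *)
Definition xd_sol m A B G (c1 c2 c3 e : bool) X Y : bool :=
  (xorn m (X + A + c1) (Y + B + c2) == (xorn m X Y + G + c3) %% 2 ^ m) &&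
  (odd ((xorn m X Y + G + c3) %/ 2 ^ m) == e).

Definition xd_count m A B G c1 c2 c3 e : nat :=
  \sum_(0 <= X < 2 ^ m) \sum_(0 <= Y < 2 ^ m) xd_sol m A B G c1 c2 c3 e X Y.

Definition xd_parity A B G (c1 c2 c3 : bool) :=
  odd A (+) c1 (+) odd B (+) c2 (+) odd G (+) c3.

Lemma xd_sol_bit_double m (a b g c1 c2 c3 x y : bool) e A B G X Y :
  xd_sol m.+1 (a + A.*2) (b + B.*2) (g + G.*2) c1 c2 c3 e (x + X.*2) (y + Y.*2) =
  ~~ (a (+) c1 (+) b (+) c2 (+) g (+) c3) &&
  xd_sol m A B G (carry x a c1) (carry y b c2) (carry (x (+) y) g c3) e X Y.
Proof.
rewrite /xd_sol xorn_bit_double !addn_bit_double xorn_bit_double.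
rewrite modn_pow2S odd_bit_double half_bit_double eqn_bit_double.
rewrite divn_pow2S half_bit_double andbA; congr (_ && _ && _).
by case: x; case: y; case: a; case: b; case: g; case: c1; case: c2; case: c3.
Qed.

Lemma xd_count_bit_double m (a b g c1 c2 c3 : bool) e A B G :
  xd_count m.+1 (a + A.*2) (b + B.*2) (g + G.*2) c1 c2 c3 e =
  if a (+) c1 (+) b (+) c2 (+) g (+) c3 then 0 else
  xd_count m A B G (carry false a c1) (carry false b c2) (carry false g c3) e +
  xd_count m A B G (carry false a c1) (carry true b c2) (carry true g c3) e +
  xd_count m A B G (carry true a c1) (carry false b c2) (carry true g c3) e +
  xd_count m A B G (carry true a c1) (carry true b c2) (carry false g c3) e.
Proof.
rewrite /xd_count expnS mul2n sum2_nat_double.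
under eq_bigr => X _ do under eq_bigr => Y _ do rewrite xd_sol_bit_double.
under [X in _ + X + _ + _]eq_bigr => X _ do under eq_bigr => Y _ do rewrite xd_sol_bit_double.
under [X in _ + X + _]eq_bigr => X _ do under eq_bigr => Y _ do rewrite xd_sol_bit_double.
under [X in _ + X]eq_bigr => X _ do under eq_bigr => Y _ do rewrite xd_sol_bit_double.
case: ifP => _ /=; last by [].
by rewrite !big1 // => *; rewrite big1.
Qed.

Lemma xd_count_rec m A B G c1 c2 c3 e :
  xd_count m.+1 A B G c1 c2 c3 e =
  if xd_parity A B G c1 c2 c3 then 0 else
  let T c1' c2' c3' := xd_count m A./2 B./2 G./2 c1' c2' c3' e in
  T (carry false (odd A) c1) (carry false (odd B) c2) (carry false (odd G) c3) +
  T (carry false (odd A) c1) (carry true (odd B) c2) (carry true (odd G) c3) +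
  T (carry true (odd A) c1) (carry false (odd B) c2) (carry true (odd G) c3) +
  T (carry true (odd A) c1) (carry true (odd B) c2) (carry false (odd G) c3).
Proof.
have := xd_count_bit_double m (odd A) (odd B) (odd G) c1 c2 c3 e A./2 B./2 G./2.
by rewrite !odd_double_half => ->.
Qed.

Lemma xd_count0_le A B G c1 c2 c3 e : xd_count 0 A B G c1 c2 c3 e <= 1.
Proof. by rewrite /xd_count expn0 !big_nat1 leq_b1. Qed.

Lemma xd_count_parity m A B G c1 c2 c3 e :
  xd_parity A B G c1 c2 c3 -> xd_count m.+1 A B G c1 c2 c3 e = 0.
Proof. by rewrite xd_count_rec => ->. Qed.

Lemma xd_count_add_le m A B G c1 c2 c3 c1' c2' c3' e k :
  xd_parity A B G c1 c2 c3 != xd_parity A B G c1' c2' c3' ->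
  xd_count m.+1 A B G c1 c2 c3 e <= k -> xd_count m.+1 A B G c1' c2' c3' e <= k ->
  xd_count m.+1 A B G c1 c2 c3 e + xd_count m.+1 A B G c1' c2' c3' e <= k.
Proof.
move=> ne_par le1 le2.
have [par|npar] := boolP (xd_parity A B G c1 c2 c3); first by rewrite xd_count_parity.
have par' : xd_parity A B G c1' c2' c3'.
  by move: ne_par npar; case: (xd_parity A B G c1 c2 c3); case: (xd_parity A B G c1' c2' c3').
by rewrite addnC xd_count_parity.
Qed.

(* [xd_count 0] ignores the carry [c1]: hence the bound 4 at [m = 1] rather than the
   recursion. *)
Fixpoint xd_bound m A (c : bool) : nat :=
  match m with
  | 0 => 1
  | 1 => 4
  | m'.+1 => if odd A == c then 4 * xd_bound m' A./2 c
             else xd_bound m' A./2 false + xd_bound m' A./2 true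
  end.

Lemma xd_boundSS m A c : xd_bound m.+2 A c =
  if odd A == c then 4 * xd_bound m.+1 A./2 c
  else xd_bound m.+1 A./2 false + xd_bound m.+1 A./2 true.
Proof. by []. Qed.

Arguments xd_bound : simpl never.

Lemma xd_count_le_bound m A B G c1 c2 c3 e :
  xd_count m A B G c1 c2 c3 e <= xd_bound m A c1.
Proof.
elim: m A B G c1 c2 c3 e => [|m IHm] A B G c1 c2 c3 e; first exact: xd_count0_le.
rewrite xd_count_rec; case: ifP => //= par.
case: m IHm => [|m] IHm.
  apply: (@leq_trans (1 + 1 + 1 + 1)) => //.
  by do 3 (apply: leq_add; last exact: IHm); exact: IHm.
rewrite xd_boundSS; case: eqP => [<- | /eqP odd_neq].
  rewrite !carry_id mulSn mulSn mulSn mul1n addnA addnA.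
  by do 3 (apply: leq_add; last exact: IHm); exact: IHm.
have par_BG : odd B (+) c2 (+) odd G (+) c3.
  by move: par odd_neq; rewrite /xd_parity; case: (odd A); case: c1; case: (odd B); case: c2;
     case: (odd G); case: c3.
have c1E : c1 = ~~ odd A by move: odd_neq; case: (odd A); case: (c1).
have carry_neg x : carry x (odd A) (~~ odd A) = x by case: x; case: (odd A).
rewrite c1E !carry_neg -addnA.
have flip c : xd_parity A./2 B./2 G./2 c (carry false (odd B) c2) (carry c (odd G) c3) !=
              xd_parity A./2 B./2 G./2 c (carry true (odd B) c2) (carry (~~ c) (odd G) c3).
  by move: par_BG; rewrite /xd_parity; case: c; case: (odd A./2); case: (odd B./2);
     case: (odd G./2); case: (odd B); case: (c2); case: (odd G); case: (c3).
by apply: leq_add; apply: xd_count_add_le (flip _) _ _; exact: IHm.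
Qed.

Lemma xd_bound_le3_neg m A c : 0 < m -> xd_bound m A c <= 3 * xd_bound m A (~~ c).
Proof.
elim: m A c => [|[|m] IHm] A c //= _.
have le_c := IHm A./2 c isT; have le_nc := IHm A./2 (~~ c) isT; rewrite negbK in le_nc.
by rewrite !xd_boundSS; case: c le_c le_nc; case: (odd A) => /=; lia.
Qed.

Lemma xd_bound_max m A c : 0 < m -> xd_bound m A c <= xd_bound m A (odd A).
Proof.
case: m => [|[|m]] // _; case: (eqVneq (odd A) c) => [<- //|ne_c].
rewrite !xd_boundSS eqxx (negbTE ne_c).
have := xd_bound_le3_neg A./2 (~~ odd A) (ltn0Sn m); rewrite negbK.
by case: (odd A) => /=; lia.
Qed.

Lemma xd_count_carry_add_le m A B G c2 c3 e :
  xd_count m.+1 A B G false c2 c3 e + xd_count m.+1 A B G true c2 c3 e <=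
  xd_bound m.+1 A (odd A).
Proof.
apply: xd_count_add_le.
- by rewrite /xd_parity; case: (odd A); case: (odd B); case: c2; case: (odd G); case: c3.
- exact: leq_trans (xd_count_le_bound _ _ _ _ _ _ _ _) (xd_bound_max _ _ _).
- exact: leq_trans (xd_count_le_bound _ _ _ _ _ _ _ _) (xd_bound_max _ _ _).
Qed.

Lemma xd_count_ref m A B c c2 d :
  (forall j, j < m -> odd (B %/ 2 ^ j) = odd (A %/ 2 ^ j) (+) d) -> c2 = c (+) d ->
  xd_count m A B 0 c c2 false false = xd_bound m A c.
Proof.
elim: m A B c c2 => [|m IHm] A B c c2 bitsB ->; first by rewrite /xd_count expn0 !big_nat1.
have oddB : odd B = odd A (+) d by have := bitsB 0 isT; rewrite expn0 !divn1.
have bits_half j : j < m -> odd (B./2 %/ 2 ^ j) = odd (A./2 %/ 2 ^ j) (+) d.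
  by move=> lt_jm; rewrite -!divn_pow2S; apply: bitsB.
have par_ok : xd_parity A B 0 c (c (+) d) false = false.
  by rewrite /xd_parity oddB; case: (odd A); case: c; case: (d).
rewrite xd_count_rec {}par_ok /=.
case: m IHm bitsB bits_half => [|m] IHm bitsB bits_half; first by rewrite /xd_count expn0 !big_nat1.
have count_half x y : xd_count m.+1 A./2 B./2 0 x y false false =
                      if y == x (+) d then xd_bound m.+1 A./2 x else 0.
  case: eqP => [y_eq | /eqP y_neq]; first exact: IHm.
  apply: xd_count_parity; rewrite /xd_parity.
  have := bits_half 0 isT; rewrite expn0 !divn1 => ->.
  by move: y_neq; case: (odd A./2); case: x; case: y; case: (d).
rewrite !count_half xd_boundSS oddB.
by case: (odd A); case: c; case: (d); rewrite /carry /=; lia.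
Qed.

(** * The XR count *)

Definition adpXR_count n r (a1 a2 a3 : bv n) : nat :=
  #|[set p : bv n * bv n | bvrotl r (bvxor (bvadd p.1 a1) (bvadd p.2 a2))
                           == bvadd (bvrotl r (bvxor p.1 p.2)) a3]|.

Lemma ler_adpXR n r (a1 a2 a3 b1 b2 b3 : bv n) :
  adpXR_count r a1 a2 a3 <= adpXR_count r b1 b2 b3 ->
  (adpXR r a1 a2 a3 <= adpXR r b1 b2 b3)%R.
Proof. by move=> le_count; rewrite ler_wpM2r ?invr_ge0 ?ler0n ?ler_nat. Qed.

Lemma adpXR_cond_nat n (A B G : bv n) X Y : 0 < n -> X < 2 ^ n -> Y < 2 ^ n ->
  (bvrotl n.-1 (bvxor (bvadd (nat2bv n X) A) (bvadd (nat2bv n Y) B)) ==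
   bvadd (bvrotl n.-1 (bvxor (nat2bv n X) (nat2bv n Y))) G) =
  (rotr1 n (xorn n (X + bv2nat A) (Y + bv2nat B)) ==
   (rotr1 n (xorn n X Y) + bv2nat G) %% 2 ^ n).
Proof.
move=> n_gt0 lt_X lt_Y.
rewrite /bvadd !bv2natK !(modn_small lt_X) !(modn_small lt_Y) !bvxor_nat2bv.
rewrite !bvrotl_nat2bv ?xorn_lt // eq_nat2bv bv2natK modnDml.
by rewrite (modn_small (rotr1_lt _ _)) ?xorn_lt.
Qed.

Lemma rotr1_xorn_bit_double m (x y a b g : bool) X Y A B G :
  (rotr1 m.+1 (xorn m.+1 (x + X.*2 + (a + A.*2)) (y + Y.*2 + (b + B.*2))) ==
   (rotr1 m.+1 (xorn m.+1 (x + X.*2) (y + Y.*2)) + (G + g * 2 ^ m)) %% 2 ^ m.+1)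
  = xd_sol m A B G (x && a) (y && b) false (a (+) b (+) g) X Y.
Proof.
have add_bits (u v : bool) U V : u + U.*2 + (v + V.*2) = (u (+) v) + (U + V + (u && v)).*2.
  by case: u; case: v => /=; lia.
rewrite !add_bits !xorn_bit_double !rotr1_bit_double.
set Z := xorn m X Y.
have -> : Z + (x (+) y) * 2 ^ m + (G + g * 2 ^ m) = ((x (+) y) + g) * 2 ^ m + (Z + G) by lia.
rewrite eqn_modn_pow2S_top ?xorn_lt // modnMDl divnMDl ?expn_gt0 // /xd_sol addn0.
congr (_ && _); rewrite !oddD !oddb.
by case: x; case: y; case: a; case: b; case: g; case: (odd _).
Qed.

Lemma rotr1_xorn_split m (x y : bool) X Y A B G : G < 2 ^ m.+1 ->
  (rotr1 m.+1 (xorn m.+1 (x + X.*2 + A) (y + Y.*2 + B)) ==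
   (rotr1 m.+1 (xorn m.+1 (x + X.*2) (y + Y.*2)) + G) %% 2 ^ m.+1)
  = xd_sol m A./2 B./2 (G %% 2 ^ m) (x && odd A) (y && odd B) false
      (odd A (+) odd B (+) odd (G %/ 2 ^ m)) X Y.
Proof.
move=> lt_G; rewrite -rotr1_xorn_bit_double !odd_double_half.
by rewrite -modn_pow2S_top (modn_small lt_G).
Qed.

(* The low bits x0, y0 of x, y produce the carries x0 && a0, y0 && b0 into the high
   part, and the bit that the rotation moves to the top fixes the final carry. *)
Lemma adpXR_count_split m (A B G : bv m.+1) :
  let a := bv2nat A in let b := bv2nat B in let g := bv2nat G in
  let T c1 c2 := xd_count m a./2 b./2 (g %% 2 ^ m) c1 c2 false
                   (odd a (+) odd b (+) odd (g %/ 2 ^ m)) in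
  adpXR_count m A B G = T false false + T false (odd b) + T (odd a) false + T (odd a) (odd b).
Proof.
rewrite /adpXR_count (card_bv_pairs (fun x y => bvrotl m (bvxor (bvadd x A) (bvadd y B))
                                      == bvadd (bvrotl m (bvxor x y)) G)) /=.
under eq_big_nat => X /andP[_ lt_X] do under eq_big_nat => Y /andP[_ lt_Y] do
  rewrite (@adpXR_cond_nat m.+1) //.
rewrite expnS mul2n sum2_nat_double -mul2n -expnS.
by congr (_ + _ + _ + _); apply: eq_bigr => X _; apply: eq_bigr => Y _;
   rewrite rotr1_xorn_split ?bv2nat_lt.
Qed.

Lemma adpXR_count_even_max m (A B G : bv m.+1) : ~~ nth false A m ->
  adpXR_count m A B G <= adpXR_count m A A (bvzero m.+1).
Proof.
move=> A_even; rewrite !adpXR_count_split /=.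
rewrite /bvzero bv2natK mod0n div0n mod0n odd_bv2nat (negbTE A_even) /=.
rewrite (@xd_count_ref m _ _ false false false) //; last by move=> j _; rewrite addbF.
by do 3 (apply: leq_add; last exact: xd_count_le_bound); exact: xd_count_le_bound.
Qed.

Lemma adpXR_count_odd_max m (A B' B G : bv m.+2) :
  nth false A m.+1 -> ~~ nth false B' m.+1 -> ~~ nth false B' m ->
  (forall i, i < m -> nth false B' i = nth false A i (+) nth false A m) ->
  adpXR_count m.+1 A B G <= adpXR_count m.+1 A B' (bvmsb m.+2).
Proof.
move=> A_odd B'_even B'_m B'_low; rewrite !adpXR_count_split /=.
have odd_half : odd (bv2nat A)./2 = nth false A m.
  by have := @odd_bv2nat_div _ A 1 isT; rewrite expn1 divn2 subSS subn0.
set a := bv2nat A; set b' := bv2nat B'.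
have bits_half j : j < m.+1 -> odd (b'./2 %/ 2 ^ j) = odd (a./2 %/ 2 ^ j) (+) odd a./2.
  move=> lt_j; rewrite -!divn_pow2S !odd_bv2nat_div // odd_half /= !subSS.
  case: j lt_j => [|j] lt_j; first by rewrite subn0 (negbTE B'_m) addbb.
  by rewrite B'_low //; lia.
have ref c : xd_count m.+1 a./2 b'./2 0 c false false false =
             if c == odd a./2 then xd_bound m.+1 a./2 c else 0.
  case: eqP => [-> | /eqP c_neq]; first by apply: (xd_count_ref bits_half); rewrite addbb.
  apply: xd_count_parity; rewrite /xd_parity.
  have := bits_half 0 isT; rewrite expn0 !divn1 => ->.
  by move: c_neq; case: c; case: (odd a./2).
have msbE : bv2nat (bvmsb m.+2) = 2 ^ m.+1 by rewrite bv2natK modn_small // ltn_exp2l.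
rewrite msbE modnn divnn expn_gt0 /=.
rewrite !odd_bv2nat A_odd (negbTE B'_even) /= !ref.
set b2 := (bv2nat B)./2; set g2 := bv2nat G %% 2 ^ m.+1; set e := (~~ _ (+) _).
have := xd_count_carry_add_le m a./2 b2 g2 false false e.
have := xd_count_carry_add_le m a./2 b2 g2 (nth false B m.+1) false e.
by case: (odd a./2) => /=; lia.
Qed.

Local Open Scope ring_scope.

Theorem theorem7 (n : nat) (hn : (2 <= n)%N) :
  (forall (alpha : bv (n - 1)) (beta gamma : bv n),
     adpXR (n - 1) (mk n (rcons alpha false)) beta gamma
     <= adpXR (n - 1) (mk n (rcons alpha false)) (mk n (rcons alpha false)) (bvzero n))
  /\
  (forall (alpha : bv (n - 2)) (beta gamma : bv n),
     adpXR (n - 1) (mk n (alpha ++ [:: false; true])) beta gamma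
     <= adpXR (n - 1) (mk n (alpha ++ [:: false; true]))
                      (mk n (alpha ++ [:: false; false])) (bvmsb n))
  /\
  (forall (alpha : bv (n - 2)) (beta gamma : bv n),
     adpXR (n - 1) (mk n (alpha ++ [:: true; true])) beta gamma
     <= adpXR (n - 1) (mk n (alpha ++ [:: true; true]))
                      (mk n (bvnot alpha ++ [:: false; false])) (bvmsb n)).
Proof.
case: n hn => [|[|m]] // _.
split; [|split] => alpha beta gamma; apply: ler_adpXR.
- apply: adpXR_count_even_max.
  by rewrite nth_mk // nth_rcons size_tuple ltnn eqxx.
- have size_alpha : size alpha = m by rewrite size_tuple; lia.
  have [A_odd A_m A_low] := nth_mk_cat2 false true size_alpha.
  have [B_even B_m B_low] := nth_mk_cat2 false false size_alpha.
  apply: adpXR_count_odd_max; rewrite ?A_odd ?B_even ?B_m // => i lt_i.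
  by rewrite A_low // B_low // A_m addbF.
- have size_alpha : size alpha = m by rewrite size_tuple; lia.
  have size_nalpha : size (bvnot alpha) = m by rewrite size_tuple; lia.
  have [A_odd A_m A_low] := nth_mk_cat2 true true size_alpha.
  have [B_even B_m B_low] := nth_mk_cat2 false false size_nalpha.
  apply: adpXR_count_odd_max; rewrite ?A_odd ?B_even ?B_m // => i lt_i.
  by rewrite A_low // B_low // A_m addbT nth_bvnot //; lia.
Qed.
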